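(* Let $d\ge3$, $n\ge1$, $0\le c<\frac{1}{d(d-1)}$, and let $$\rho(c,0)=\Big(\frac1{2d}-\frac{d-1}2c\Big)\sum_{i=0}^{d-1}|ii\rangle\langle ii|+\frac1{d(d-1)}\sum_{i<j}|\psi^-_{ij}\rangle\langle\psi^-_{ij}|+c\sum_{i<j}|\psi^+_{ij}\rangle\langle\psi^+_{ij}|.$$ Then the null space of $(\rho(c,0)^{PT})^{\otimes n}$ contains no nonzero vector of Schmidt rank less than three of the form $$|\psi\rangle=\sum_{i_1,\dots,i_n=0}^{d-1}a_{i_1\dots i_n}|\Phi_{i_1}\rangle\otimes\cdots\otimes|\Phi_{i_n}\rangle,$$ where $|\Phi_k\rangle=\frac1{\sqrt d}\sum_{j=0}^{d-1}e^{2\pi ijk/d}|jj\rangle$.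
   Context: $|\psi^{\pm}_{ij}\rangle=\frac1{\sqrt2}(|ij\rangle\pm|ji\rangle)$, sums over $0\le i<j\le d-1$. $\rho^{PT}$ is the partial transpose on the second factor of $\mathbb{C}^d\otimes\mathbb{C}^d$. The $n$-fold tensor product acts on $(\mathbb{C}^d\otimes\mathbb{C}^d)^{\otimes n}$, regarded as a bipartite space $(\mathbb{C}^d)^{\otimes n}_A\otimes(\mathbb{C}^d)^{\otimes n}_B$ with the first factor of each copy belonging to $A$; Schmidt rank is with respect to this bipartition. *)

From HB Require Import structures.
From mathcomp Require Import all_boot all_order all_algebra.
From mathcomp Require Import all_classical all_reals all_analysis.
From mathcomp Require Import complex.
Set Implicit Arguments. Unset Strict Implicit. Unset Printing Implicit Defensive.
Import Order.TTheory GRing.Theory Num.Theory.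
Local Open Scope ring_scope.
Local Open Scope complex_scope.

Section Defs.
Variable R : realType.
Local Notation C := R[i].
Variable d : nat.

(* basis index of C^d (x) C^d : pairs (i,j) standing for |ij> *)
Definition ket2 := ('I_d * 'I_d)%type.

Definition e2 (i j : 'I_d) : ket2 -> C := fun x => ((x.1 == i) && (x.2 == j))%:R.

Definition invsqrt2 : C := ((Num.sqrt (2 : R))^-1)%:C.

Definition psi_plus (i j : 'I_d) : ket2 -> C := fun x => invsqrt2 * (e2 i j x + e2 j i x).
Definition psi_minus (i j : 'I_d) : ket2 -> C := fun x => invsqrt2 * (e2 i j x - e2 j i x).

Definition outer (u v : ket2 -> C) : ket2 -> ket2 -> C :=
  fun x y => u x * Num.conj (v y).

Definition rho (c : R) : ket2 -> ket2 -> C := fun x y =>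
  ((1 / (2 * d%:R) - (d%:R - 1) / 2 * c)%:C * \sum_(i < d) outer (e2 i i) (e2 i i) x y)
  + ((1 / (d%:R * (d%:R - 1)) : R)%:C *
      \sum_(i < d) \sum_(j < d | (i < j)%N) outer (psi_minus i j) (psi_minus i j) x y)
  + (c%:C * \sum_(i < d) \sum_(j < d | (i < j)%N) outer (psi_plus i j) (psi_plus i j) x y).

(* partial transpose on the second tensor factor:
   <ij| M^PT |kl> = <il| M |kj> *)
Definition ptrans (M : ket2 -> ket2 -> C) : ket2 -> ket2 -> C :=
  fun x y => M (x.1, y.2) (y.1, x.2).

Variable n : nat.

(* basis index of (C^d (x) C^d)^{(x) n}, regarded as (C^d)^{(x)n}_A (x) (C^d)^{(x)n}_B:
   an A-multi-index and a B-multi-index (first factor of copy t -> A, second -> B) *)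
Definition idxA := {ffun 'I_n -> 'I_d}.
Definition idx := (idxA * idxA)%type.

Definition tpow (M : ket2 -> ket2 -> C) : idx -> idx -> C := fun x y =>
  \prod_(t < n) M (x.1 t, x.2 t) (y.1 t, y.2 t).

Definition in_null (M : idx -> idx -> C) (psi : idx -> C) : Prop :=
  forall x, \sum_(y : idx) M x y * psi y = 0.

(* Schmidt rank w.r.t. the A|B bipartition: rank of the coefficient matrix psi(a,b) *)
Definition schmidt_rank (psi : idx -> C) : nat :=
  \rank (\matrix_(a < #|idxA|, b < #|idxA|) psi (enum_val a, enum_val b)).

Definition omega : C := cos (2 * pi / d%:R) +i* sin (2 * pi / d%:R).

Definition Phi (k : 'I_d) : ket2 -> C := fun x =>
  ((Num.sqrt (d%:R : R))^-1)%:C * \sum_(j < d) omega ^+ (j * k) * e2 j j x.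

Definition Phi_form (psi : idx -> C) : Prop :=
  exists a : idxA -> C, forall x : idx,
    psi x = \sum_(I : idxA) a I * \prod_(t < n) Phi (I t) (x.1 t, x.2 t).

End Defs.

From HB Require Import structures.
From mathcomp Require Import all_boot all_order all_algebra.
From mathcomp Require Import all_classical all_reals all_analysis.
From mathcomp Require Import complex.
From mathcomp Require Import ring zify.
Import Order.TTheory GRing.Theory Num.Theory.
Local Open Scope ring_scope.
Local Open Scope complex_scope.

(* Every |Phi_k> lies in span{|jj>}, so psi is supported on the diagonal
   multi-indices (v, v) and its coefficient matrix is diagonal: Schmidt rank
   < 3 leaves at most two nonzero values g v := psi (v, v).  Restricted to
   span{|aa>}, the partial transpose of rho(c,0) has P on the diagonal and Q
   off it, so its n-th tensor power acts on g through the Hamming-type kernel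
   prod_t (if u_t = v_t then P else Q).  As d >= 3, for any x, y some u differs
   from both in every coordinate, which gives Q^n (g x + g y) = 0; moving u onto
   x in one coordinate where x and y differ gives a second equation, and
   Q < 0 < P - Q (from c < 1/(d(d-1))) forces g x = g y = 0. *)

Section HammingKernel.
Context {F : fieldType} {I A : finType}.

Definition hamming_kernel (P Q : F) (u v : {ffun I -> A}) : F :=
  \prod_(t : I) (if u t == v t then P else Q).

Lemma exists_ffun_avoiding (x y : {ffun I -> A}) : (3 <= #|A|)%N ->
  exists u : {ffun I -> A}, forall t, (u t != x t) && (u t != y t).
Proof.
move=> A_ge3.
have avoid (a b : A) : exists k : A, (k != a) && (k != b).
  have /card_gt0P[k] : (0 < #|~: [set a; b]|)%N.
    by have := cardsC [set a; b]; rewrite cards2; lia.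
  by rewrite !inE negb_or; exists k.
have [f fP] := fin_all_exists (fun t => avoid (x t) (y t)).
by exists [ffun t => f t] => t; rewrite ffunE.
Qed.

Context {P Q : F}.
Hypotheses (A_ge3 : (3 <= #|A|)%N) (Q_neq0 : Q != 0) (P_neq_Q : P != Q).

Lemma null_hamming_kernel_support2 {g : {ffun I -> A} -> F} {x y : {ffun I -> A}} :
  (forall u, \sum_v hamming_kernel P Q u v * g v = 0) ->
  (forall v, v != x -> v != y -> g v = 0) -> g x = 0.
Proof.
move=> ker supp.
have [u avoid] := exists_ffun_avoiding x y A_ge3.
have K_avoid v : v = x \/ v = y -> hamming_kernel P Q u v = Q ^+ #|I|.
  move=> xy_v; rewrite -prodr_const; apply: eq_bigr => t _.
  by have /andP[ux uy] := avoid t; case: xy_v => ->; rewrite ?(negbTE ux) ?(negbTE uy).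
case: (eqVneq x y) supp => [<-|xy] supp.
  have := ker u; rewrite (bigD1 x) //= big1 => [|v vx]; last by rewrite supp ?mulr0.
  move/eqP; rewrite addr0 K_avoid; last by left.
  by rewrite mulf_eq0 expf_eq0 (negbTE Q_neq0) andbF => /eqP.
have sum_xy w : \sum_v hamming_kernel P Q w v * g v =
    hamming_kernel P Q w x * g x + hamming_kernel P Q w y * g y.
  rewrite (bigD1 x) //= (bigD1 y) 1?eq_sym //= [X in _ + (_ + X)]big1 ?addr0 //.
  by move=> v /andP[vy vx]; rewrite supp ?mulr0.
have gy : g y = - g x.
  have := ker u; rewrite sum_xy !K_avoid; [|by right|by left].
  move/eqP; rewrite -mulrDr mulf_eq0 expf_eq0 (negbTE Q_neq0) andbF /=.
  by rewrite addrC addr_eq0 => /eqP.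
have [s xy_s] : exists s, x s != y s.
  apply/existsP; rewrite -negb_forall; apply: contra xy => /forallP xy_all.
  by apply/eqP/ffunP => t; apply/eqP/xy_all.
(* Moving [u] onto [x] at the coordinate [s] separates the weights of [x] and [y]. *)
pose w := [ffun t => if t == s then x s else u t].
pose K := \prod_(t | t != s) Q.
have K_w v : v = x \/ v = y ->
    hamming_kernel P Q w v = (if x s == v s then P else Q) * K.
  move=> xy_v; rewrite /hamming_kernel (bigD1 s) //= ffunE eqxx; congr (_ * _).
  apply: eq_bigr => t ts; rewrite ffunE (negbTE ts).
  by have /andP[ux uy] := avoid t; case: xy_v => ->; rewrite ?(negbTE ux) ?(negbTE uy).
have := ker w; rewrite sum_xy !K_w; [|by right|by left].
rewrite eqxx (negbTE xy_s) gy => ker_w.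
have : (P - Q) * K * g x = 0 by rewrite -ker_w; ring.
have K_neq0 : K != 0 by apply/prodf_neq0.
by move/eqP; rewrite !mulf_eq0 subr_eq0 (negbTE P_neq_Q) (negbTE K_neq0) => /eqP.
Qed.

End HammingKernel.

Lemma card_le2_subset_set2 {T : finType} {S : {set T}} {x : T} :
  x \in S -> (#|S| <= 2)%N -> exists y, S \subset [set x; y].
Proof.
move=> Sx; rewrite (cardsD1 x) Sx add1n ltnS leq_eqVlt ltnS leqn0.
case/orP => [/cards1P[y Sy] | /eqP/cards0_eq S0].
  exists y; apply/fintype.subsetP => v Sv; rewrite !inE.
  case: eqVneq => //= vx.
  have : v \in S :\ x by rewrite !inE vx Sv.
  by rewrite Sy inE.
exists x; apply/fintype.subsetP => v Sv; rewrite !inE orbb.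
apply: contraT => vx; have : v \in S :\ x by rewrite !inE vx Sv.
by rewrite S0 inE.
Qed.

Lemma mxrank_mxsub {F : fieldType} {m n m' n'} (f : 'I_m' -> 'I_m) (g : 'I_n' -> 'I_n)
  (M : 'M[F]_(m, n)) : (\rank (mxsub f g M) <= \rank M)%N.
Proof.
have -> : mxsub f g M = mxsub f g (1%:M *m (M *m 1%:M)) by rewrite mul1mx mulmx1.
rewrite mxsub_mul; apply: leq_trans (mxrankM_maxr _ _) _.
rewrite mxsub_mul; apply: leq_trans (mxrankM_maxl _ _) _.
by rewrite [rowsub _ _]mxsub_id.
Qed.

Definition rhoPT_diag_coef {R : realFieldType} (D c : R) := 1 / (2 * D) - (D - 1) / 2 * c.
Definition rhoPT_offdiag_coef {R : realFieldType} (D c : R) :=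
  (c - 1 / (D * (D - 1))) / 2.

Lemma rhoPT_offdiag_coef_lt0 (R : realFieldType) (D c : R) :
  c < 1 / (D * (D - 1)) -> rhoPT_offdiag_coef D c < 0.
Proof. by move=> c_lt; rewrite pmulr_llt0 ?subr_lt0 // invr_gt0. Qed.

Lemma rhoPT_offdiag_coef_lt_diag (R : realFieldType) (D c : R) : 1 < D ->
  c < 1 / (D * (D - 1)) -> rhoPT_offdiag_coef D c < rhoPT_diag_coef D c.
Proof.
move=> D_gt1 c_lt.
have D1_gt0 : 0 < D - 1 by rewrite subr_gt0.
have D_gt0 : 0 < D by rewrite (lt_trans ltr01).
have c_DD : c * (D * (D - 1)) < 1 by rewrite -ltr_pdivlMr ?mulr_gt0.
rewrite -subr_gt0.
have -> : rhoPT_diag_coef D c - rhoPT_offdiag_coef D c =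
    (1 - c * (D * (D - 1))) / (2 * (D - 1)).
  by rewrite /rhoPT_diag_coef /rhoPT_offdiag_coef; field; rewrite !gt_eqF.
by rewrite divr_gt0 ?subr_gt0 ?mulr_gt0.
Qed.

Section RhoPartialTranspose.
Context {R : realType} {d : nat}.
Implicit Types (a b i j : 'I_d) (c : R).

Lemma conj_invsqrt2 : Num.conj (invsqrt2 R) = invsqrt2 R.
Proof. by rewrite conj_Creal // complex_real. Qed.

Lemma invsqrt2_sq : invsqrt2 R * invsqrt2 R = (2^-1 : R)%:C.
Proof. by rewrite /invsqrt2 -rmorphM -invfM -expr2 sqr_sqrtr. Qed.

Lemma e2_swap i j a b : e2 R i j (b, a) = e2 R j i (a, b).
Proof. by rewrite /e2 /= andbC. Qed.

Lemma e2_pair_excl i j a b : i != j ->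
  ((a == i) && (b == j)) && ((a == j) && (b == i)) = false.
Proof.
move=> ij; apply/negP => /andP[/andP[/eqP ai _] /andP[/eqP aj _]].
by rewrite -ai -aj eqxx in ij.
Qed.

Lemma outer_psi_minus_swap i j a b : i != j ->
  outer (psi_minus R i j) (psi_minus R i j) (a, b) (b, a) =
  - (2^-1 : R)%:C * (e2 R i j (a, b) + e2 R j i (a, b)).
Proof.
move=> ij; rewrite /outer /psi_minus !(e2_swap _ _ a) rmorphM rmorphB /= conj_invsqrt2.
rewrite /e2 /= !conjC_nat -invsqrt2_sq.
move: (e2_pair_excl _ _ a b ij).
by case: ((a == i) && (b == j)); case: ((a == j) && (b == i)) => //= _; ring.
Qed.

Lemma outer_psi_plus_swap i j a b : i != j ->
  outer (psi_plus R i j) (psi_plus R i j) (a, b) (b, a) =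
  (2^-1 : R)%:C * (e2 R i j (a, b) + e2 R j i (a, b)).
Proof.
move=> ij; rewrite /outer /psi_plus !(e2_swap _ _ a) rmorphM rmorphD /= conj_invsqrt2.
rewrite /e2 /= !conjC_nat -invsqrt2_sq.
move: (e2_pair_excl _ _ a b ij).
by case: ((a == i) && (b == j)); case: ((a == j) && (b == i)) => //= _; ring.
Qed.

Lemma sum_lt_e2 a b :
  \sum_(i < d) \sum_(j < d | (i < j)%N) e2 R i j (a, b) = (a < b)%:R.
Proof.
rewrite (bigD1 a) //= [X in _ + X]big1 ?addr0 => [|i ia]; last first.
  by apply: big1 => j _; rewrite /e2 /= eq_sym (negbTE ia).
rewrite /e2 /= eqxx; case: ltnP => [ab|ba].
  rewrite (bigD1 b) //= eqxx big1 ?addr0 // => j /andP[_ jb].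
  by rewrite eq_sym (negbTE jb).
rewrite big1 // => j aj; rewrite eq_sym; case: eqP => // jb.
by rewrite jb ltnNge ba in aj.
Qed.

Lemma sum_lt_e2_sym a b :
  \sum_(i < d) \sum_(j < d | (i < j)%N) (e2 R i j (a, b) + e2 R j i (a, b)) =
  (a != b)%:R.
Proof.
under eq_bigr => i _ do rewrite big_split.
rewrite big_split /=; under [X in _ + X]eq_bigr => i _ do under eq_bigr => j _ do
  rewrite -e2_swap.
by rewrite !sum_lt_e2 -natrD neq_ltn; case: ltngtP.
Qed.

Lemma sum_outer_e2_swap a b :
  \sum_(i < d) outer (e2 R i i) (e2 R i i) (a, b) (b, a) = (a == b)%:R.
Proof.
rewrite (bigD1 a) //= big1 ?addr0 => [|i ia]; last first.
  by rewrite /outer /e2 /= eq_sym (negbTE ia) mul0r.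
by rewrite /outer /e2 /= eqxx /= conjC_nat -natrM andbT mulnb andbb eq_sym.
Qed.

Lemma ptrans_rho_diag c a b :
  ptrans (rho c) (a, a) (b, b) =
  (if a == b then rhoPT_diag_coef d%:R c else rhoPT_offdiag_coef d%:R c)%:C.
Proof.
have lt_neq i j : (i < j)%N -> i != j.
  by move=> ij; apply: contraTneq ij => ->; rewrite ltnn.
rewrite /ptrans /rho /= sum_outer_e2_swap.
under eq_bigr => i _ do under eq_bigr => j /lt_neq ij do rewrite outer_psi_minus_swap //.
under [in X in _ + X]eq_bigr => i _ do under eq_bigr => j /lt_neq ij do
  rewrite outer_psi_plus_swap //.
rewrite -!(eq_bigr _ (fun i _ => big_distrr _ _ _)) -!big_distrr /= !sum_lt_e2_sym.
case: eqVneq => [_|_] /=; rewrite ?mulr0n ?mulr1n ?mulr0 ?mulr1 ?addr0 //.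
by rewrite add0r -rmorphN -!rmorphM -rmorphD /rhoPT_offdiag_coef; congr (_%:C); ring.
Qed.

End RhoPartialTranspose.


Section DiagonalSupport.
Context {R : realType} {d n : nat}.
Implicit Types (psi : idx d n -> R[i]).

Lemma Phi_offdiag k (a b : 'I_d) : a != b -> Phi R k (a, b) = 0.
Proof.
move=> ab; rewrite /Phi big1 ?mulr0 // => j _; rewrite /e2 /=.
by case: eqVneq => [<-|] /=; rewrite ?mulr0 // eq_sym (negbTE ab) mulr0.
Qed.

Lemma Phi_form_offdiag {psi} : Phi_form psi -> forall x, x.1 != x.2 -> psi x = 0.
Proof.
case=> coef psiE x x12; rewrite psiE big1 // => I _.
have [t xt] : exists t, x.1 t != x.2 t.
  apply/existsP; rewrite -negb_forall; apply: contra x12 => /forallP x12_all.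
  by apply/eqP/ffunP => t; apply/eqP/x12_all.
by rewrite (bigD1 t) //= Phi_offdiag // mul0r mulr0.
Qed.

Lemma in_null_tpow_diag {M : ket2 d -> ket2 d -> R[i]} {psi} :
  in_null (tpow M) psi -> (forall x, x.1 != x.2 -> psi x = 0) ->
  forall u : idxA d n,
    \sum_(v : idxA d n) (\prod_(t < n) M (u t, u t) (v t, v t)) * psi (v, v) = 0.
Proof.
move=> null off u; rewrite -[RHS](null (u, u)).
have -> : \sum_(y : idx d n) tpow M (u, u) y * psi y =
    \sum_v \sum_w tpow M (u, u) (v, w) * psi (v, w).
  by rewrite pair_big /=; apply: eq_big => // -[].
apply: eq_bigr => v _.
rewrite (bigD1 v) //= [X in _ + X]big1 ?addr0 // => w wv.
by rewrite off ?mulr0 // eq_sym.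
Qed.

Definition diag_support psi : {set idxA d n} := [set v | psi (v, v) != 0].

Lemma card_diag_support_le_schmidt_rank {psi} : (forall x, x.1 != x.2 -> psi x = 0) ->
  (#|diag_support psi| <= schmidt_rank psi)%N.
Proof.
move=> off; set S := diag_support psi.
pose f (i : 'I_#|S|) := enum_rank (enum_val i).
have diag : mxsub f f (\matrix_(a, b) psi (enum_val a, enum_val b)) =
    diag_mx (\row_i psi (enum_val i, enum_val i)).
  apply/matrixP => i j; rewrite !mxE /f !enum_rankK.
  have [<-|ij] := eqVneq i j; first by rewrite mulr1n.
  by rewrite mulr0n off //= (inj_eq enum_val_inj).
rewrite /schmidt_rank; apply: leq_trans _ (mxrank_mxsub f f _).
rewrite diag mxrank_unit //.
rewrite unitmxE det_diag unitfE; apply/prodf_neq0 => i _; rewrite mxE.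
by have := enum_valP i; rewrite inE.
Qed.

End DiagonalSupport.

Theorem lemma5 (R : realType) (d n : nat) (c : R) :
  (3 <= d)%N -> (1 <= n)%N -> 0 <= c -> c < 1 / (d%:R * (d%:R - 1)) ->
  forall psi : idx d n -> R[i],
    Phi_form psi -> in_null (@tpow R d n (@ptrans R d (@rho R d c))) psi ->
    (schmidt_rank psi < 3)%N -> psi = (fun _ => 0).
Proof.
move=> d_ge3 _ _ c_lt psi psi_Phi psi_null psi_rank.
set P := rhoPT_diag_coef d%:R c.
set Q := rhoPT_offdiag_coef d%:R c.
have off := Phi_form_offdiag psi_Phi.
have card_ge3 : (3 <= #|'I_d|)%N by rewrite card_ord.
have d_gt1 : 1 < d%:R :> R by rewrite ltr1n (leq_trans _ d_ge3).
have Q_neq0 : Q%:C != 0 by rewrite fmorph_eq0 lt_eqF // rhoPT_offdiag_coef_lt0.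
have P_neq_Q : P%:C != Q%:C.
  by rewrite (inj_eq (@complexI _)) gt_eqF // rhoPT_offdiag_coef_lt_diag.
have ker u : \sum_v hamming_kernel P%:C Q%:C u v * psi (v, v) = 0.
  rewrite -[RHS](in_null_tpow_diag psi_null off u); apply: eq_bigr => v _.
  by congr (_ * _); apply: eq_bigr => t _; rewrite ptrans_rho_diag; case: eqP.
have card_supp : (#|diag_support psi| <= 2)%N.
  by rewrite -ltnS (leq_ltn_trans (card_diag_support_le_schmidt_rank off)).
apply: funext => -[a b]; have [<-{b}|ab] := eqVneq a b; last exact: off.
apply/eqP; apply: contraT => psi_a.
have a_supp : a \in diag_support psi by rewrite inE.
have [y supp_ay] := card_le2_subset_set2 a_supp card_supp.
have supp v : v != a -> v != y -> psi (v, v) = 0.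
  move=> va vy; apply/eqP; apply: contraT => psi_v.
  have := fintype.subsetP supp_ay v; rewrite !inE psi_v (negbTE va) (negbTE vy).
  by move/(_ isT).
by rewrite (null_hamming_kernel_support2 card_ge3 Q_neq0 P_neq_Q ker supp) eqxx in psi_a.
Qed.
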